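(* Let $G$ be a connected graph and let $(T,\mathcal X)$, $\mathcal X=\{X_t:t\in V(T)\}$, be a tree-cut decomposition of $G$ of finite adhesion whose parts are exactly the $\omega$-edge blocks of $G$ and such that for every edge $t_1t_2\in E(T)$ there is an edge of $G$ between $X_{t_1}$ and $X_{t_2}$. For a subgraph $C'$ of $T$ write $\bigcup C'=\bigcup_{t\in V(C')}X_t$. Then: (1) for every region $C'$ of $T$, the induced subgraph $G[\bigcup C']$ is a region of $G$; (2) for every region $C$ of $G$ there exist finitely many pairwise disjoint regions $C'_1,\dots,C'_n$ of $T$ such that $C=G[\bigcup C'_1\cup\dots\cup\bigcup C'_n]$.
   Context: Two vertices $x,y$ of $G$ are finitely separable if some finite set of edges separates them in $G$; the equivalence classes of the relation ''not finitely separable'' are the $\omega$-edge blocks of $G$. A tree-cut decomposition of $G$ is a pair $(T,\mathcal X)$ with $T$ a tree and $\mathcal X=\{X_t:t\in V(T)\}$ a partition of $V(G)$ into nonempty parts indexed by $V(T)$. For an edge $e=t_1t_2$ of $T$ with $T_1\ni t_1$, $T_2\ni t_2$ the components of $T-e$, its adhesion set is $X_e=E_G(\bigcup_{t\in T_1}X_t,\bigcup_{t\in T_2}X_t)$; finite adhesion means all $X_e$ are finite. A region of a graph $H$ is a connected induced subgraph $C$ with finite boundary $\partial C=\{xy\in E(H):x\in C,y\notin C\}$. *)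

From Stdlib Require Import List Relations.
Import ListNotations.

Record graph := Graph {
  vert :> Type;
  adj : vert -> vert -> Prop;
  adj_sym : forall x y, adj x y -> adj y x;
  adj_irrefl : forall x, ~ adj x x
}.
Arguments adj {g} _ _.

(* A finite set of edges, given as a finite list of (ordered) pairs;
   the unordered edge {u,v} belongs to F iff (u,v) or (v,u) occurs in F. *)
Definition edge_in {G : graph} (F : list (G * G)) (u v : G) : Prop :=
  In (u, v) F \/ In (v, u) F.

Definition adj_minus {G : graph} (F : list (G * G)) (u v : G) : Prop :=
  adj u v /\ ~ edge_in F u v.

Definition fin_separable (G : graph) (x y : G) : Prop :=
  exists F : list (G * G), ~ clos_refl_trans G (adj_minus F) x y.

Definition adj_in {G : graph} (S : G -> Prop) (u v : G) : Prop :=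
  S u /\ S v /\ adj u v.

Definition connected_set (G : graph) (S : G -> Prop) : Prop :=
  (exists x, S x) /\
  forall x y, S x -> S y -> clos_refl_trans G (adj_in S) x y.

Definition connected_graph (G : graph) : Prop :=
  connected_set G (fun _ => True).

(* An edge set (given as a predicate on ordered pairs, symmetric in use)
   is finite if all its edges are listed in some finite list. *)
Definition finite_edges {G : graph} (E : G -> G -> Prop) : Prop :=
  exists l : list (G * G), forall x y, E x y -> In (x, y) l.

Definition boundary {G : graph} (C : G -> Prop) (x y : G) : Prop :=
  adj x y /\ C x /\ ~ C y.

(* A region: a connected induced subgraph with finite boundary
   (represented by its vertex set). *)
Definition region (G : graph) (C : G -> Prop) : Prop :=
  connected_set G C /\ finite_edges (boundary C).

Fixpoint is_walk {G : graph} (x : G) (l : list G) : Prop :=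
  match l with
  | [] => True
  | y :: l' => adj x y /\ is_walk y l'
  end.

Definition is_cycle {G : graph} (v0 : G) (l : list G) : Prop :=
  2 <= length l /\ NoDup (v0 :: l) /\ is_walk v0 l /\ adj (last l v0) v0.

Definition is_tree (T : graph) : Prop :=
  connected_graph T /\ forall v0 l, ~ @is_cycle T v0 l.

(* Tree-cut decomposition of G over tree T: the partition {X_t} of V(G)
   into nonempty parts indexed by V(T) is encoded by the map f : V(G) -> V(T)
   with X_t = f^{-1}(t); nonemptiness of parts = surjectivity of f. *)
Definition tree_cut_decomposition (G T : graph) (f : G -> T) : Prop :=
  is_tree T /\ forall t : T, exists x : G, f x = t.

(* For an edge t1t2 of T: the component of T - t1t2 containing t1. *)
Definition side {T : graph} (t1 t2 : T) : T -> Prop :=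
  clos_refl_trans T
    (fun u v => adj u v /\ ~ ((u = t1 /\ v = t2) \/ (u = t2 /\ v = t1))) t1.

Definition adhesion {G T : graph} (f : G -> T) (t1 t2 : T) (x y : G) : Prop :=
  adj x y /\ side t1 t2 (f x) /\ side t2 t1 (f y).

Definition finite_adhesion {G T : graph} (f : G -> T) : Prop :=
  forall t1 t2 : T, adj t1 t2 -> finite_edges (adhesion f t1 t2).

Definition parts_are_omega_blocks {G T : graph} (f : G -> T) : Prop :=
  forall x y : G, f x = f y <-> ~ fin_separable G x y.

Definition bigU {G T : graph} (f : G -> T) (C' : T -> Prop) : G -> Prop :=
  fun x => C' (f x).

(* Since the parts are the omega-edge blocks, a set of vertices with finite
   boundary contains, with any vertex, its whole part, and is connected inside
   each part: two vertices of one block are joined by a walk avoiding the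
   boundary, which therefore never leaves the set.
   (1) An edge of G leaving the union of the parts of a region C' of T lies in
   the adhesion set of the edge by which a path in T between the parts of its
   ends last leaves C'; so the boundary is covered by finitely many adhesion
   sets.  Connectivity comes from the connectivity inside parts together with
   the G-edges realising the edges of C'.
   (2) A region C of G is the union of the parts indexed by its image D in T.
   Every component of T[D] is a region of T, since its boundary edges are
   realised by boundary edges of C, and every component contains the image of
   a fixed vertex of C or of an end of a boundary edge of C, so there are
   finitely many of them. *)
From Stdlib Require Import List Relations Classical Lia.
Import ListNotations.

Section ReflTransClosure.

Variable A : Type.

Lemma crt_mono (R1 R2 : relation A) :
  inclusion A R1 R2 -> inclusion A (clos_refl_trans A R1) (clos_refl_trans A R2).
Proof.
  intros H12 x y Hxy; induction Hxy.
  - now apply rt_step, H12.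
  - apply rt_refl.
  - now apply rt_trans with y.
Qed.

Lemma crt_sym (R : relation A) :
  symmetric A R -> symmetric A (clos_refl_trans A R).
Proof.
  intros HR x y Hxy; induction Hxy.
  - now apply rt_step, HR.
  - apply rt_refl.
  - now apply rt_trans with y.
Qed.

Definition restrict_out (R : relation A) (P : A -> Prop) : relation A :=
  fun s t => R s t /\ ~ P s /\ ~ P t.

Lemma crt_last_exit (R : relation A) (P : A -> Prop) a b :
  clos_refl_trans A R a b -> P a -> ~ P b ->
  exists u v, R u v /\ P u /\ ~ P v /\
    clos_refl_trans A (restrict_out R P) v b.
Proof.
  intros Hab Ha; apply clos_rt_rtn1 in Hab.
  induction Hab as [|y z Ryz Hay IH]; intros Hz; [contradiction|].
  destruct (classic (P y)) as [Hy | Hy].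
  - exists y, z; repeat split; auto using rt_refl.
  - destruct (IH Hy) as (u & v & Ruv & Hu & Hv & Hvy).
    exists u, v; repeat split; auto.
    apply rt_trans with y; [exact Hvy | now apply rt_step].
Qed.

Lemma representatives (P : A -> Prop) (eqv : relation A) (d : A) :
  reflexive A eqv -> symmetric A eqv -> forall cs : list A,
  exists R : list A,
    (forall r, In r R -> P r) /\
    (forall i j, i < length R -> j < length R -> i <> j ->
       ~ eqv (nth i R d) (nth j R d)) /\
    (forall c, In c cs -> P c -> exists r, In r R /\ eqv r c).
Proof.
  intros Hrefl Hsym cs; induction cs as [|c cs IH].
  { exists []; repeat split; [easy | simpl; lia | easy]. }
  destruct IH as (R & HRP & HRsep & HRcov).
  destruct (classic (P c /\ forall r, In r R -> ~ eqv r c)) as [[Hc Hnew] | Hold].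
  - exists (c :: R); repeat split.
    + now intros r [<- | Hr]; auto.
    + intros [|i] [|j] Hi Hj Hij; simpl in *; try lia.
      * intros Hcj; apply (Hnew (nth j R d)); [apply nth_In; lia | now apply Hsym].
      * apply Hnew, nth_In; lia.
      * apply HRsep; lia.
    + intros c' [<- | Hc'] Pc'.
      * exists c; split; [now left | apply Hrefl].
      * destruct (HRcov c' Hc' Pc') as (r & Hr & Hrc'); exists r; split; [now right | exact Hrc'].
  - exists R; repeat split; auto.
    intros c' [<- | Hc'] Pc'; [|now apply HRcov].
    apply NNPP; intros Hno; apply Hold; split; [exact Pc'|].
    intros r Hr Hrc'; apply Hno; now exists r.
Qed.

End ReflTransClosure.

Section Graphs.

Variable G : graph.

Lemma adj_in_sym (S : G -> Prop) : symmetric G (adj_in S).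
Proof. intros x y (Sx & Sy & Hxy); repeat split; auto using adj_sym. Qed.

Lemma adj_in_closure_mem (S : G -> Prop) a b :
  clos_refl_trans G (adj_in S) a b -> S a -> S b.
Proof. intros Hab; induction Hab; auto; now intros _; apply H. Qed.

Lemma finite_edges_mono (E1 E2 : G -> G -> Prop) :
  (forall x y, E1 x y -> E2 x y) -> finite_edges E2 -> finite_edges E1.
Proof. intros H12 [l Hl]; exists l; auto. Qed.

Lemma finite_edges_Union {I : Type} (E : I -> G -> G -> Prop) (l : list I) :
  (forall i, In i l -> finite_edges (E i)) ->
  finite_edges (fun x y => exists i, In i l /\ E i x y).
Proof.
  induction l as [|i l IH]; intros Hfin.
  { exists []; now intros x y (j & [] & _). }
  destruct (Hfin i (or_introl eq_refl)) as [li Hli].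
  destruct IH as [ll Hll]; [intros j Hj; apply Hfin; now right|].
  exists (li ++ ll); intros x y (j & [<- | Hj] & Hxy); apply in_or_app; eauto.
Qed.

Lemma walk_avoiding_boundary_in (S : G -> Prop) (F : list (G * G)) u v :
  (forall a b, boundary S a b -> In (a, b) F) ->
  clos_refl_trans G (adj_minus F) u v -> S u ->
  S v /\ clos_refl_trans G (adj_in S) u v.
Proof.
  intros HF Huv; induction Huv as [x y [Hxy HnF] | x | x y z _ IHxy _ IHyz]; intros Hx.
  - destruct (classic (S y)) as [Hy | Hy].
    + split; [exact Hy | now apply rt_step].
    + exfalso; apply HnF; left; apply HF; now repeat split.
  - split; [exact Hx | apply rt_refl].
  - destruct (IHxy Hx) as [Hy Pxy]; destruct (IHyz Hy) as [Hz Pyz].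
    split; [exact Hz | now apply rt_trans with y].
Qed.

Lemma not_fin_separable_in (S : G -> Prop) x y :
  finite_edges (boundary S) -> ~ fin_separable G x y -> S x ->
  S y /\ clos_refl_trans G (adj_in S) x y.
Proof.
  intros [F HF] Hxy Hx; apply (walk_avoiding_boundary_in S F); auto.
  apply NNPP; intros Hsep; apply Hxy; now exists F.
Qed.

Definition component (S : G -> Prop) (r : G) : G -> Prop :=
  clos_refl_trans G (adj_in S) r.

Lemma component_connected (S : G -> Prop) r :
  S r -> connected_set G (component S r).
Proof.
  intros Hr; split; [exists r; apply rt_refl|].
  assert (Hlift : forall s t, clos_refl_trans G (adj_in S) s t -> component S r s ->
                  clos_refl_trans G (adj_in (component S r)) s t).
  { intros s t Hst; induction Hst as [s t Hst | s | s t u Hst IHst _ IHtu]; intros Hs.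
    - apply rt_step; repeat split; [exact Hs | | apply Hst].
      apply rt_trans with s; [exact Hs | now apply rt_step].
    - apply rt_refl.
    - apply rt_trans with t; [now apply IHst|].
      apply IHtu, rt_trans with s; assumption. }
  intros a b Ha Hb; apply rt_trans with r.
  - apply crt_sym; [apply adj_in_sym | now apply Hlift; [|apply rt_refl]].
  - now apply Hlift; [|apply rt_refl].
Qed.

Lemma component_boundary (S : G -> Prop) r a b :
  S r -> boundary (component S r) a b -> S a /\ ~ S b.
Proof.
  intros Hr (Hab & Ha & Hb); split; [now apply (adj_in_closure_mem S r)|].
  intros HSb; apply Hb, rt_trans with a; [exact Ha|].
  apply rt_step; repeat split; [now apply (adj_in_closure_mem S r) | exact HSb | exact Hab].
Qed.

Lemma component_exit (S : G -> Prop) r t :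
  connected_graph G -> ~ component S r t ->
  exists u v, boundary (component S r) u v.
Proof.
  intros [_ HG] Ht.
  destruct (crt_last_exit G _ (component S r) r t (HG r t I I) (rt_refl _ _ r) Ht)
    as (u & v & (_ & _ & Huv) & Hu & Hv & _).
  now exists u, v.
Qed.

End Graphs.

Section TreeCut.

Variables (G T : graph) (f : G -> T).
Hypothesis T_connected : connected_graph T.
Hypothesis f_surj : forall t : T, exists x : G, f x = t.
Hypothesis f_finite_adhesion : finite_adhesion f.
Hypothesis f_omega_blocks : parts_are_omega_blocks f.
Hypothesis f_edges_realised :
  forall t1 t2 : T, adj t1 t2 -> exists x y : G, adj x y /\ f x = t1 /\ f y = t2.

Lemma part_in (S : G -> Prop) x y :
  finite_edges (boundary S) -> S x -> f x = f y ->
  S y /\ clos_refl_trans G (adj_in S) x y.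
Proof.
  intros HS Hx Hxy; apply not_fin_separable_in; auto; now apply f_omega_blocks.
Qed.

Lemma boundary_bigU_adhesion (C' : T -> Prop) x y :
  connected_set T C' -> boundary (bigU f C') x y ->
  exists u v, boundary C' u v /\ adhesion f u v x y.
Proof.
  intros [_ HC'] (Hxy & Hx & Hy).
  destruct (crt_last_exit T _ C' (f x) (f y) (proj2 T_connected _ _ I I) Hx Hy)
    as (u & v & (_ & _ & Huv) & Hu & Hv & Hvy).
  exists u, v; split; [now repeat split|]; repeat split; [exact Hxy | |].
  - apply (crt_mono T (adj_in C')); [|now apply HC'].
    intros a b (Ha & Hb & Hab); split; [exact Hab|].
    intros [[_ ->] | [-> _]]; contradiction.
  - apply (crt_mono T (restrict_out T (adj_in (fun _ => True)) C')); [|exact Hvy].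
    intros a b ((_ & _ & Hab) & Ha & Hb); split; [exact Hab|].
    intros [[_ ->] | [-> _]]; contradiction.
Qed.

Lemma bigU_finite_boundary (C' : T -> Prop) :
  region T C' -> finite_edges (boundary (bigU f C')).
Proof.
  intros [HC' [lT HlT]].
  set (E := fun (p : T * T) x y => boundary C' (fst p) (snd p) /\ adhesion f (fst p) (snd p) x y).
  apply (finite_edges_mono G _ (fun x y => exists p, In p lT /\ E p x y)).
  - intros x y Hxy; destruct (boundary_bigU_adhesion C' x y HC' Hxy) as (u & v & Huv & Hadh).
    exists (u, v); split; [now apply HlT | now split].
  - apply finite_edges_Union; intros [u v] _.
    destruct (classic (boundary C' u v)) as [Huv | Huv].
    + apply (finite_edges_mono G _ (adhesion f u v)); [now intros x y [_ H]|].
      apply f_finite_adhesion, Huv.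
    + exists []; now intros x y [].
Qed.

Lemma bigU_connected (C' : T -> Prop) :
  connected_set T C' -> finite_edges (boundary (bigU f C')) ->
  connected_set G (bigU f C').
Proof.
  intros [[t0 Ht0] HC'] Hfin.
  split; [destruct (f_surj t0) as [x0 <-]; now exists x0|].
  assert (Hlift : forall s t, clos_refl_trans T (adj_in C') s t -> C' s ->
            forall x y, f x = s -> f y = t -> clos_refl_trans G (adj_in (bigU f C')) x y).
  { intros s t Hst; induction Hst as [s t (Hs & Ht & Hst) | s | s t u Hst IHst _ IHtu];
      intros HCs x y <- Hy.
    - destruct (f_edges_realised _ _ Hst) as (x' & y' & Hxy' & Hx' & Hy').
      apply rt_trans with x'; [apply (part_in _ x x' Hfin HCs); congruence|].
      apply rt_trans with y'; [apply rt_step; unfold adj_in, bigU; rewrite Hx', Hy'; auto|].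
      apply (part_in _ y' y Hfin); unfold bigU; congruence.
    - apply (part_in _ x y Hfin HCs); congruence.
    - destruct (f_surj t) as [w Hw].
      apply rt_trans with w; [now apply IHst|].
      apply (IHtu (adj_in_closure_mem T C' _ _ Hst HCs)); auto. }
  intros x y Hx Hy; exact (Hlift _ _ (HC' _ _ Hx Hy) Hx x y eq_refl eq_refl).
Qed.

Lemma region_bigU (C' : T -> Prop) : region T C' -> region G (bigU f C').
Proof.
  intros HC'; pose proof (bigU_finite_boundary C' HC') as Hfin.
  split; [apply bigU_connected, Hfin; apply HC' | exact Hfin].
Qed.

Definition image_of (C : G -> Prop) : T -> Prop := fun t => exists x, C x /\ f x = t.

Lemma image_of_part (C : G -> Prop) x :
  finite_edges (boundary C) -> image_of C (f x) <-> C x.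
Proof.
  intros HC; split; [|now exists x].
  intros (x' & Hx' & Hfx'); now apply (part_in C x' x).
Qed.

Lemma boundary_image_realised (C : G -> Prop) u v :
  finite_edges (boundary C) -> boundary (image_of C) u v ->
  exists x y, boundary C x y /\ f x = u /\ f y = v.
Proof.
  intros HC (Huv & Hu & Hv).
  destruct (f_edges_realised u v Huv) as (x & y & Hxy & <- & <-).
  exists x, y; repeat split; auto.
  - now apply image_of_part.
  - intros Hy; apply Hv; now exists y.
Qed.

Lemma region_component_image (C : G -> Prop) r :
  region G C -> image_of C r -> region T (component T (image_of C) r).
Proof.
  intros [_ [L HL]] Hr; split; [now apply component_connected|].
  exists (map (fun p => (f (fst p), f (snd p))) L).
  intros a b Hab.
  destruct (component_boundary T _ r a b Hr Hab) as [Ha Hb].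
  destruct (boundary_image_realised C a b) as (x & y & Hxy & <- & <-);
    [now exists L | repeat split; auto; apply Hab|].
  apply (in_map (fun p => (f (fst p), f (snd p))) L (x, y)), HL, Hxy.
Qed.

Lemma component_image_exit (C : G -> Prop) x t :
  finite_edges (boundary C) -> C x -> ~ component T (image_of C) (f x) t ->
  exists x' y', boundary C x' y' /\ component T (image_of C) (f x) (f x').
Proof.
  intros HC Hx Ht.
  destruct (component_exit T _ _ t T_connected Ht) as (u & v & Huv).
  destruct (component_boundary T (image_of C) (f x) u v) as [Hu Hv]; [now exists x | exact Huv|].
  destruct (boundary_image_realised C u v HC) as (x' & y' & Hxy' & <- & <-);
    [repeat split; auto; apply Huv|].
  exists x', y'; split; [exact Hxy' | apply Huv].
Qed.

Lemma region_decomposition (C : G -> Prop) :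
  region G C ->
  exists (n : nat) (Cs : nat -> T -> Prop),
    (forall i, i < n -> region T (Cs i)) /\
    (forall i j, i < n -> j < n -> i <> j -> forall t, ~ (Cs i t /\ Cs j t)) /\
    (forall x : G, C x <-> exists i, i < n /\ bigU f (Cs i) x).
Proof.
  intros HCreg; pose proof HCreg as [[[x0 Hx0] _] [L HL]].
  set (D := image_of C); set (comp := component T D).
  assert (comp_sym : symmetric T comp) by apply crt_sym, adj_in_sym.
  assert (comp_trans : transitive T comp) by (intros a b c; apply rt_trans).
  set (cands := f x0 :: map (fun p => f (fst p)) L).
  assert (Hcands : forall x, C x -> exists c, In c cands /\ D c /\ comp (f x) c).
  { intros x Hx; destruct (classic (comp (f x) (f x0))) as [H0 | H0].
    - exists (f x0); repeat split; [now left | now exists x0 | exact H0].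
    - destruct (component_image_exit C x (f x0)) as (x' & y' & Hxy' & Hc);
        [now exists L | exact Hx | exact H0 |].
      exists (f x'); repeat split; [| exists x'; split; [apply Hxy' | reflexivity] | exact Hc].
      right; apply (in_map (fun p => f (fst p)) L (x', y')), HL, Hxy'. }
  destruct (representatives T D comp (f x0) (fun t => rt_refl _ _ t) comp_sym cands)
    as (R & HRD & HRsep & HRcov).
  exists (length R), (fun i => comp (nth i R (f x0))).
  split; [|split; [|intros x; split]].
  - intros i Hi; apply region_component_image; [exact HCreg | apply HRD, nth_In, Hi].
  - intros i j Hi Hj Hij t [Hit Hjt].
    apply (HRsep i j Hi Hj Hij), comp_trans with t; [exact Hit | now apply comp_sym].
  - intros Hx; destruct (Hcands x Hx) as (c & Hc & HDc & Hxc).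
    destruct (HRcov c Hc HDc) as (r & Hr & Hrc).
    destruct (In_nth R r (f x0) Hr) as (i & Hi & <-).
    exists i; split; [exact Hi|].
    apply comp_trans with c; [exact Hrc | now apply comp_sym].
  - intros (i & Hi & Hx).
    apply (image_of_part C x); [now exists L|].
    apply (adj_in_closure_mem T D (nth i R (f x0))); [exact Hx | apply HRD, nth_In, Hi].
Qed.

End TreeCut.

Theorem lemma2p5 (G T : graph) (f : G -> T) :
  connected_graph G ->
  tree_cut_decomposition G T f ->
  finite_adhesion f ->
  parts_are_omega_blocks f ->
  (forall t1 t2 : T, adj t1 t2 ->
     exists x y : G, adj x y /\ f x = t1 /\ f y = t2) ->
  (forall C' : T -> Prop, region T C' -> region G (bigU f C')) /\
  (forall C : G -> Prop, region G C ->
     exists (n : nat) (Cs : nat -> T -> Prop),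
       (forall i, i < n -> region T (Cs i)) /\
       (forall i j, i < n -> j < n -> i <> j ->
          forall t, ~ (Cs i t /\ Cs j t)) /\
       (forall x : G, C x <-> exists i, i < n /\ bigU f (Cs i) x)).
Proof.
  intros _ [[T_connected _] f_surj] Hfa Hp Hedge; split.
  - apply region_bigU; assumption.
  - apply region_decomposition; assumption.
Qed.
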